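(* If $(a_k)_{k\in\mathbb Z}\in l^1(\mathbb Z)$ satisfies $a_k=\frac12a_{3k-2}+a_{3k}+\frac12a_{3k+2}$ for all $k\in\mathbb Z$, then $a_k=0$ for all $k\neq0$. *)

From Stdlib Require Import Reals ZArith.
Open Scope R_scope.

Definition abs_partial_sum (a : Z -> R) (N : nat) : R :=
  sum_f_R0 (fun i => Rabs (a (Z.of_nat i - Z.of_nat N)%Z)) (2 * N).

Definition in_l1Z (a : Z -> R) : Prop :=
  exists M : R, forall N : nat, abs_partial_sum a N <= M.

(* Put h k := |a k|.  The recurrence and the triangle inequality give
   2 h k <= h (3k-2) + 2 h (3k) + h (3k+2).  Summing over a window |k| <= M
   and counting the multiples of 3 twice shows that the weighted sums
   G M := sum_{|j| <= M} w j h j, with w = 2 on multiples of 3 and w = 1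
   elsewhere, satisfy G M + h j <= G (3M+2) for every j not divisible by 3
   inside the window.  Since G is bounded by 2 ||a||_1, this forces a j = 0
   off the multiples of 3.  The recurrence then reduces to a (3k) = a k, so
   a k = a (3^n k) for all n; for k <> 0 these indices are distinct, and
   summability forces a k = 0. *)
From Stdlib Require Import Reals ZArith List Lia Lra FinFun.
Import ListNotations.
Open Scope R_scope.

Fixpoint lsum {A : Type} (g : A -> R) (l : list A) : R :=
  match l with [] => 0 | x :: t => g x + lsum g t end.

Lemma lsum_app {A : Type} (g : A -> R) l1 l2 :
  lsum g (l1 ++ l2) = lsum g l1 + lsum g l2.
Proof. induction l1 as [|x l1 IH]; simpl; [|rewrite IH]; ring. Qed.

Lemma lsum_map {A B : Type} (g : B -> R) (f : A -> B) l :
  lsum g (map f l) = lsum (fun x => g (f x)) l.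
Proof. induction l as [|x l IH]; simpl; [|rewrite IH]; ring. Qed.

Lemma lsum_flat_map {A B : Type} (g : B -> R) (f : A -> list B) l :
  lsum g (flat_map f l) = lsum (fun x => lsum g (f x)) l.
Proof. induction l as [|x l IH]; simpl; [|rewrite lsum_app, IH]; ring. Qed.

Lemma lsum_ext {A : Type} (f g : A -> R) l :
  (forall x, f x = g x) -> lsum f l = lsum g l.
Proof. intros H; induction l as [|x l IH]; simpl; [|rewrite IH, H]; ring. Qed.

Lemma lsum_plus {A : Type} (f g : A -> R) l :
  lsum (fun x => f x + g x) l = lsum f l + lsum g l.
Proof. induction l as [|x l IH]; simpl; [|rewrite IH]; ring. Qed.

Lemma lsum_scal {A : Type} (c : R) (f : A -> R) l :
  lsum (fun x => c * f x) l = c * lsum f l.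
Proof. induction l as [|x l IH]; simpl; [|rewrite IH]; ring. Qed.

Lemma lsum_const_in {A : Type} (g : A -> R) (c : R) l :
  (forall x, In x l -> g x = c) -> lsum g l = INR (length l) * c.
Proof.
  induction l as [|x l IH]; intros Hc; simpl lsum; simpl length; [simpl; ring|].
  rewrite S_INR, (Hc x), IH; [ring | intros y Hy | simpl]; auto with datatypes.
Qed.

Lemma lsum_le {A : Type} (f g : A -> R) l :
  (forall x, f x <= g x) -> lsum f l <= lsum g l.
Proof. intros H; induction l as [|x l IH]; simpl; [lra|]. specialize (H x); lra. Qed.

Lemma lsum_nonneg {A : Type} (f : A -> R) l : (forall x, 0 <= f x) -> 0 <= lsum f l.
Proof. intros H; induction l as [|x l IH]; simpl; [lra|]. specialize (H x); lra. Qed.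

Lemma lsum_ge_In {A : Type} (f : A -> R) l x :
  (forall y, 0 <= f y) -> In x l -> f x <= lsum f l.
Proof.
  intros H; induction l as [|y l IH]; simpl; [tauto|].
  intros [<-|Hx].
  - pose proof (lsum_nonneg f l H); lra.
  - specialize (H y); specialize (IH Hx); lra.
Qed.

Lemma lsum_incl_le {A : Type} (g : A -> R) l l' :
  (forall x, 0 <= g x) -> NoDup l -> incl l l' -> lsum g l <= lsum g l'.
Proof.
  intros Hg Hl; revert l'; induction Hl as [|x l Hx Hl IH]; intros l' Hincl; simpl.
  - apply lsum_nonneg; auto.
  - destruct (in_split x l') as [l1 [l2 ->]]; [apply Hincl; simpl; auto|].
    assert (Hrest : lsum g l <= lsum g (l1 ++ l2)).
    { apply IH; intros y Hy.
      assert (Hy' : In y (l1 ++ x :: l2)) by (apply Hincl; simpl; auto).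
      apply in_app_or in Hy'; apply in_or_app.
      destruct Hy' as [|[<-|]]; auto; contradiction. }
    rewrite lsum_app in Hrest |- *; simpl; lra.
Qed.

Lemma NoDup_flat_map {A B : Type} (f : A -> list B) l :
  (forall x, NoDup (f x)) ->
  (forall x y z, In z (f x) -> In z (f y) -> x = y) ->
  NoDup l -> NoDup (flat_map f l).
Proof.
  intros Hf Hdisj; induction 1 as [|x l Hx Hl IH]; simpl; [constructor|].
  apply NoDup_app; auto.
  intros z Hzx Hzl; apply in_flat_map in Hzl as [y [Hy Hzy]].
  rewrite (Hdisj x y z Hzx Hzy) in Hx; contradiction.
Qed.

Lemma sum_f_R0_lsum (f : nat -> R) n : sum_f_R0 f n = lsum f (seq 0 (S n)).
Proof.
  induction n as [|n IH]; simpl sum_f_R0; [simpl; ring|].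
  rewrite IH, (seq_S (S n)), lsum_app; simpl; ring.
Qed.

Lemma nonpos_of_multiples_bounded (c B : R) : (forall n, INR n * c <= B) -> c <= 0.
Proof.
  intros Hn; destruct (Rle_lt_dec c 0) as [|Hc]; auto.
  destruct (INR_archimed c B Hc) as [n Hbig]; specialize (Hn n); lra.
Qed.

Lemma bounded_uniform_increment_nonpos (G : nat -> R) (s : nat -> nat) (K c : R) m0 :
  (forall M, G M <= K) -> (forall M, (M <= s M)%nat) ->
  (forall M, (m0 <= M)%nat -> G M + c <= G (s M)) -> c <= 0.
Proof.
  intros HK Hs Hinc.
  assert (Hiter : forall n : nat, exists M, (m0 <= M)%nat /\ G m0 + INR n * c <= G M).
  { induction n as [|n [M [HM HGM]]].
    - exists m0; split; [lia | simpl; lra].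
    - exists (s M); split; [specialize (Hs M); lia|].
      specialize (Hinc M HM); rewrite S_INR; lra. }
  apply (nonpos_of_multiples_bounded c (K - G m0)); intros n.
  destruct (Hiter n) as [M [_ HGM]]; specialize (HK M); lra.
Qed.

Lemma Rabs_nonpos_eq0 (x : R) : Rabs x <= 0 -> x = 0.
Proof. unfold Rabs; destruct Rcase_abs; lra. Qed.

Definition window (N : nat) : list Z :=
  map (fun i => (Z.of_nat i - Z.of_nat N)%Z) (seq 0 (2 * N + 1)).

Lemma in_window N j : In j (window N) <-> (- Z.of_nat N <= j <= Z.of_nat N)%Z.
Proof.
  unfold window; rewrite in_map_iff; split.
  - intros [i [<- Hi]]; apply in_seq in Hi; lia.
  - intros Hj; exists (Z.to_nat (j + Z.of_nat N)); rewrite in_seq; lia.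
Qed.

Lemma window_NoDup N : NoDup (window N).
Proof. apply Injective_map_NoDup; [intros i i' ?; lia | apply seq_NoDup]. Qed.

Lemma incl_window (l : list Z) : exists N, incl l (window N).
Proof.
  induction l as [|x l [N HN]].
  - exists 0%nat; intros y [].
  - exists (Nat.max N (Z.abs_nat x)); intros y [<-|Hy]; apply in_window; [lia|].
    apply HN, in_window in Hy; lia.
Qed.

Lemma abs_partial_sum_window (a : Z -> R) N :
  abs_partial_sum a N = lsum (fun j => Rabs (a j)) (window N).
Proof.
  unfold abs_partial_sum, window; rewrite sum_f_R0_lsum, lsum_map.
  do 2 f_equal; lia.
Qed.

Lemma lsum_le_of_window_bound (h : Z -> R) (B : R) l :
  (forall j, 0 <= h j) -> (forall N, lsum h (window N) <= B) ->
  NoDup l -> lsum h l <= B.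
Proof.
  intros Hh HB Hl; destruct (incl_window l) as [N HN].
  apply Rle_trans with (lsum h (window N)); auto using lsum_incl_le.
Qed.

Definition mult3_weight (j : Z) : R := if (j mod 3 =? 0)%Z then 2 else 1.

Lemma mult3_weight_bounds j : 1 <= mult3_weight j <= 2.
Proof. unfold mult3_weight; destruct (_ =? _)%Z; lra. Qed.

Lemma mult3_weight_nonmult j : (j mod 3 <> 0)%Z -> mult3_weight j = 1.
Proof. unfold mult3_weight; intros Hj; apply Z.eqb_neq in Hj; now rewrite Hj. Qed.

Lemma mod3_rec_indices k :
  ((3 * k - 2) mod 3 = 1 /\ (3 * k) mod 3 = 0 /\ (3 * k + 2) mod 3 = 2)%Z.
Proof. Z.div_mod_to_equations; lia. Qed.

Definition rec_indices (k : Z) : list Z := [3 * k - 2; 3 * k; 3 * k + 2]%Z.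

Lemma lsum_weight_rec_indices (h : Z -> R) k :
  lsum (fun j => mult3_weight j * h j) (rec_indices k) =
  h (3 * k - 2)%Z + 2 * h (3 * k)%Z + h (3 * k + 2)%Z.
Proof.
  destruct (mod3_rec_indices k) as [H1 [H0 H2]].
  unfold rec_indices, mult3_weight; cbn [lsum]; rewrite H1, H0, H2; simpl; ring.
Qed.

Lemma rec_indices_NoDup_flat_map l : NoDup l -> NoDup (flat_map rec_indices l).
Proof.
  apply NoDup_flat_map.
  - intros k; unfold rec_indices; repeat constructor; cbn [In]; lia.
  - intros k k' j; unfold rec_indices; cbn [In]; intros Hk Hk'; lia.
Qed.

Lemma rec_indices_window M :
  incl (flat_map rec_indices (window M)) (window (3 * M + 2)).
Proof.
  intros j Hj; apply in_flat_map in Hj as [k [Hk Hj]].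
  apply in_window in Hk; apply in_window; unfold rec_indices in Hj; cbn [In] in Hj; lia.
Qed.

Lemma Rabs_rec_le (x y z : R) :
  2 * Rabs (/ 2 * x + y + / 2 * z) <= Rabs x + 2 * Rabs y + Rabs z.
Proof. unfold Rabs; repeat destruct Rcase_abs; lra. Qed.

Section SummableSolution.

Variable a : Z -> R.
Hypothesis a_rec : forall k : Z,
  a k = / 2 * a (3 * k - 2)%Z + a (3 * k)%Z + / 2 * a (3 * k + 2)%Z.
Variable B : R.
Hypothesis a_window_bound : forall N, lsum (fun j => Rabs (a j)) (window N) <= B.

Definition weighted_sum (M : nat) : R :=
  lsum (fun j => mult3_weight j * Rabs (a j)) (window M).

Lemma weighted_sum_bound M : weighted_sum M <= 2 * B.
Proof.
  apply Rle_trans with (lsum (fun j => 2 * Rabs (a j)) (window M)).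
  - apply lsum_le; intros j.
    pose proof (mult3_weight_bounds j); pose proof (Rabs_pos (a j)); nra.
  - rewrite lsum_scal; specialize (a_window_bound M); lra.
Qed.

Lemma twice_window_le_weighted_sum M :
  lsum (fun k => 2 * Rabs (a k)) (window M) <= weighted_sum (3 * M + 2).
Proof.
  apply Rle_trans with
    (lsum (fun j => mult3_weight j * Rabs (a j)) (flat_map rec_indices (window M))).
  - rewrite lsum_flat_map; apply lsum_le; intros k.
    rewrite lsum_weight_rec_indices, (a_rec k); apply Rabs_rec_le.
  - apply lsum_incl_le; auto using rec_indices_NoDup_flat_map, window_NoDup,
      rec_indices_window.
    intros j; pose proof (mult3_weight_bounds j); pose proof (Rabs_pos (a j)); nra.
Qed.

Lemma weighted_sum_increment M j :
  (j mod 3 <> 0)%Z -> In j (window M) ->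
  weighted_sum M + Rabs (a j) <= weighted_sum (3 * M + 2).
Proof.
  intros Hj HjM.
  assert (Hsplit : lsum (fun k => 2 * Rabs (a k)) (window M) =
    weighted_sum M + lsum (fun k => (2 - mult3_weight k) * Rabs (a k)) (window M)).
  { unfold weighted_sum; rewrite <- lsum_plus; apply lsum_ext; intros; ring. }
  assert (Hj_term : Rabs (a j) <=
      lsum (fun k => (2 - mult3_weight k) * Rabs (a k)) (window M)).
  { replace (Rabs (a j)) with ((2 - mult3_weight j) * Rabs (a j))
      by (rewrite mult3_weight_nonmult; auto; ring).
    apply (lsum_ge_In (fun k => (2 - mult3_weight k) * Rabs (a k))); auto.
    intros k; pose proof (mult3_weight_bounds k); pose proof (Rabs_pos (a k)); nra. }
  pose proof (twice_window_le_weighted_sum M); lra.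
Qed.

Lemma solution_nonmult3_zero j : (j mod 3 <> 0)%Z -> a j = 0.
Proof.
  intros Hj; apply Rabs_nonpos_eq0.
  apply (bounded_uniform_increment_nonpos weighted_sum (fun M => 3 * M + 2)%nat
           (2 * B) _ (Z.abs_nat j)).
  - exact weighted_sum_bound.
  - intros M; lia.
  - intros M HM; apply weighted_sum_increment; auto; apply in_window; lia.
Qed.

Lemma solution_mul3 k : a (3 * k)%Z = a k.
Proof.
  destruct (mod3_rec_indices k) as [H1 [_ H2]].
  rewrite (a_rec k), (solution_nonmult3_zero (3 * k - 2)),
    (solution_nonmult3_zero (3 * k + 2)) by lia; ring.
Qed.

Lemma solution_mul_pow3 n k : a (3 ^ Z.of_nat n * k)%Z = a k.
Proof.
  induction n as [|n IH]; [now rewrite Z.mul_1_l|].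
  rewrite Nat2Z.inj_succ, Z.pow_succ_r, <- Z.mul_assoc, solution_mul3 by lia.
  exact IH.
Qed.

Lemma solution_zero k : k <> 0%Z -> a k = 0.
Proof.
  intros Hk; apply Rabs_nonpos_eq0, (nonpos_of_multiples_bounded _ B); intros n.
  set (orbit := map (fun i => 3 ^ Z.of_nat i * k)%Z (seq 0 n)).
  assert (Horbit : lsum (fun j => Rabs (a j)) orbit = INR n * Rabs (a k)).
  { rewrite (lsum_const_in _ (Rabs (a k))).
    - unfold orbit; now rewrite length_map, length_seq.
    - intros j Hj; apply in_map_iff in Hj as [i [<- _]]; now rewrite solution_mul_pow3. }
  rewrite <- Horbit; apply lsum_le_of_window_bound; auto using Rabs_pos.
  apply Injective_map_NoDup; [|apply seq_NoDup].
  intros i i' Hii'; apply Z.mul_cancel_r, Z.pow_inj_r in Hii'; lia.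
Qed.

End SummableSolution.

Theorem corollary3p6 (a : Z -> R) :
  in_l1Z a ->
  (forall k : Z,
      a k = / 2 * a (3 * k - 2)%Z + a (3 * k)%Z + / 2 * a (3 * k + 2)%Z) ->
  forall k : Z, k <> 0%Z -> a k = 0.
Proof.
  intros [B HB] Hrec.
  apply (solution_zero a Hrec B); intros N.
  rewrite <- abs_partial_sum_window; apply HB.
Qed.
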